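(* Let $D\mapsto f_D\in\mathbb{H}$ be a functional summary on a collection $\mathcal{D}$ of datasets, and suppose there exist adjacent datasets $D_1,D_2\in\mathcal{D}$ with $f_{D_1}-f_{D_2}\in\mathcal{H}_C\setminus\mathcal{H}_{1,C}$. Let $Z$ be an ICLP with mean $0$ and covariance operator $C$. Then for every $\epsilon>0$ there is no $\sigma>0$ such that the mechanism $D\mapsto f_D+\sigma Z$ satisfies $\epsilon$-differential privacy.
   Context: $\mathbb{H}$ is a real separable infinite-dimensional Hilbert space. $C$ is a covariance operator on $\mathbb{H}$ with eigenvalues $\lambda_1\ge\lambda_2\ge\dots>0$ and eigenvectors $\{\phi_j\}_{j\ge1}$ forming an orthonormal basis of $\mathbb{H}$; $h_j=\langle h,\phi_j\rangle$. $\|h\|_C=(\sum_j h_j^2/\lambda_j)^{1/2}$, $\mathcal{H}_C=\{h:\|h\|_C<\infty\}$, $\|h\|_{1,C}=\sum_j|h_j|/\sqrt{\lambda_j}$, $\mathcal{H}_{1,C}=\{h:\|h\|_{1,C}<\infty\}\subseteq\mathcal{H}_C$. An ICLP with mean $\mu$ and covariance operator $C$ is the random element $\mu+\sum_{j\ge1}\sqrt{\lambda_j}Z_j\phi_j$ (series converging in $L^2(\Omega;\mathbb{H})$), where $Z_j$ are i.i.d. Laplace with mean $0$ and variance $1$, i.e. with density $\frac1{\sqrt2}e^{-\sqrt2|x|}$. Datasets $D,D'$ are adjacent if they differ in exactly one record. For a mechanism releasing the random element $\tilde f_D$, let $P_D$ be its law on the Borel $\sigma$-algebra of $\mathbb{H}$;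 the mechanism is $\epsilon$-differentially private if $P_D(A)\le e^{\epsilon}P_{D'}(A)$ for all adjacent $D,D'$ and all Borel $A\subseteq\mathbb{H}$. *)

From HB Require Import structures.
From mathcomp Require Import all_boot all_order all_algebra.
From mathcomp Require Import all_classical all_reals all_analysis.
Set Implicit Arguments. Unset Strict Implicit. Unset Printing Implicit Defensive.
Import Order.TTheory GRing.Theory Num.Theory.
Import numFieldNormedType.Exports.
Local Open Scope classical_set_scope.
Local Open Scope ring_scope.

(* The Hilbert space H is represented in the coordinates h_j = <h, phi_j>
   w.r.t. the eigenbasis (phi_j) of C, i.e. as l^2(N). *)

Section Defs.
Variable R : realType.

Definition in_l2 (x : nat -> R) : Prop :=
  (\sum_(0 <= j <oo) ((x j) ^+ 2)%:E < +oo)%E.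

Definition l2set : set (nat -> R) := [set x | in_l2 x].

Definition l2open : set (set (nat -> R)) :=
  [set A | A `<=` l2set /\
    forall x, A x -> exists r : R, 0 < r /\
      forall y, in_l2 y ->
        (\sum_(0 <= j <oo) ((x j - y j) ^+ 2)%:E < (r ^+ 2)%:E)%E -> A y].

Definition l2Borel : set (set (nat -> R)) := <<s l2set, l2open >>.

Definition in_HC (lam : nat -> R) (h : nat -> R) : Prop :=
  in_l2 h /\ (\sum_(0 <= j <oo) ((h j) ^+ 2 / lam j)%:E < +oo)%E.

Definition in_H1C (lam : nat -> R) (h : nat -> R) : Prop :=
  in_l2 h /\ (\sum_(0 <= j <oo) (`|h j| / Num.sqrt (lam j))%:E < +oo)%E.

Definition cov_eigenvalues (lam : nat -> R) : Prop :=
  (forall j, 0 < lam j) /\ (forall j, lam j.+1 <= lam j) /\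
  (\sum_(0 <= j <oo) (lam j)%:E < +oo)%E.

(* Laplace density with mean 0 and variance 1 *)
Definition laplace_pdf (x : R) : R :=
  (Num.sqrt 2)^-1 * expR (- (Num.sqrt 2 * `|x|)).

Definition iid_laplace d (Omega : measurableType d) (P : probability Omega R)
  (Z : nat -> Omega -> R) : Prop :=
  (forall j, measurable_fun setT (Z j)) /\
  (forall j (B : set R), measurable B ->
     P (Z j @^-1` B) = (\int[@lebesgue_measure R]_(x in B) (laplace_pdf x)%:E)%E) /\
  (forall (I : seq nat) (B : nat -> set R), uniq I ->
     (forall i, measurable (B i)) ->
     P (\bigcap_(i in [set i | i \in I]) (Z i @^-1` B i)) =
     (\big[*%E/1%E]_(i <- I) P (Z i @^-1` B i))%E).

(* the ICLP  sum_j sqrt(lam_j) Z_j phi_j, in coordinates *)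
Definition iclp0 d (Omega : measurableType d) (lam : nat -> R)
  (Z : nat -> Omega -> R) (w : Omega) : nat -> R :=
  fun j => Num.sqrt (lam j) * Z j w.

Definition adjacent_datasets (Rec : eqType) (D D' : seq Rec) : Prop :=
  size D = size D' /\ count (fun p => p.1 != p.2) (zip D D') = 1%N.

Definition eps_DP (Rec : eqType) d (Omega : measurableType d)
  (P : probability Omega R) (Dc : set (seq Rec))
  (M : seq Rec -> Omega -> (nat -> R)) (eps : R) : Prop :=
  forall D D', Dc D -> Dc D' -> adjacent_datasets D D' ->
  forall A, l2Borel A ->
    (P (M D @^-1` A) <= (expR eps)%:E * P (M D' @^-1` A))%E.

End Defs.

From HB Require Import structures.
From mathcomp Require Import all_boot all_order all_algebra.
From mathcomp Require Import all_classical all_reals all_analysis.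
From mathcomp Require Import ring lra zify.
Import measurable_realfun.
Set Implicit Arguments. Unset Strict Implicit. Unset Printing Implicit Defensive.
Import Order.TTheory GRing.Theory Num.Theory.
Import numFieldNormedType.Exports.
Local Open Scope classical_set_scope.
Local Open Scope ring_scope.

(** Put [h := f_D1 - f_D2] and test the mechanism on the Borel set [A_n] of
    those [y] in [H] with [y_j >= f_D1,j] when [h_j >= 0] and [y_j <= f_D1,j]
    when [h_j < 0], for all [j < n].  The noise coordinates
    [sigma sqrt(lam_j) Z_j] are independent Laplace variables, so
    [P_D1(A_n) = 2^-n] while
    [P_D2(A_n) = 2^-n exp(- sqrt 2 / sigma * sum_(j < n) |h_j| / sqrt(lam_j))].
    If [h] is not in [H_{1,C}] the sum diverges, so the ratio of the two
    probabilities is unbounded in [n].  Besides the Laplace tails, the only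
    analytic input is that the noise lies in [H] almost surely, which follows
    from [E (sum_j lam_j Z_j^2) < +oo]. *)

Lemma nneseries_ge_term (R : realType) (u : nat -> \bar R) (j : nat) :
  (forall k, 0 <= u k)%E -> (u j <= \sum_(0 <= k <oo) u k)%E.
Proof.
move=> u_ge0; rewrite (@nneseriesD1 _ _ j xpredT) //.
by rewrite leeDl //; apply: nneseries_ge0.
Qed.

Lemma nneseries_pinfty_partial_gt (R : realType) (u : nat -> R) (M : R) :
  (forall k, 0 <= u k) -> (\sum_(0 <= k <oo) (u k)%:E = +oo)%E ->
  exists n, M < \sum_(0 <= k < n) u k.
Proof.
move=> u_ge0 u_div; apply: contrapT => bounded.
suff : (\sum_(0 <= k <oo) (u k)%:E <= M%:E)%E by rewrite u_div leye_eq.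
apply: lime_le; first by apply: is_cvg_nneseries => k _ _; rewrite lee_fin.
apply: nearW => n; rewrite sumEFin lee_fin leNgt; apply/negP => M_lt.
by apply: bounded; exists n.
Qed.

Section laplace_density.
Variable R : realType.
Local Notation sqrt2 := (Num.sqrt (2 : R)).

Lemma laplace_pdf_ge0 (x : R) : 0 <= laplace_pdf x.
Proof. by rewrite /laplace_pdf mulr_ge0 ?expR_ge0 // invr_ge0 sqrtr_ge0. Qed.

Lemma laplace_pdfN (x : R) : laplace_pdf (- x) = laplace_pdf x.
Proof. by rewrite /laplace_pdf normrN. Qed.

Lemma continuous_laplace_pdf : continuous (@laplace_pdf R).
Proof.
move=> x; apply: (@continuousM _ R^o (fun=> _) (fun x => expR (- (sqrt2 * `|x|)))).
  exact: cst_continuous.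
apply: continuous_comp; last exact: continuous_expR.
apply: (@continuousN _ R^o).
apply: (@continuousM _ R^o (fun=> _) (fun x => `|x|)); first exact: cst_continuous.
exact: norm_continuous.
Qed.

Let primitive (x : R) := - (expR (- (sqrt2 * x)) / 2).

Let continuous_primitive : continuous primitive.
Proof.
move=> x.
have cexp : {for x, continuous (fun y : R => expR (- (sqrt2 * y)))}.
  apply: continuous_comp; last exact: continuous_expR.
  apply: (@continuousN _ R^o).
  by apply: (@continuousM _ R^o (fun=> sqrt2) id); [exact: cst_continuous|].
have cinv2 : {for x, continuous (fun=> (2^-1 : R))} by exact: cst_continuous.
exact: (@continuousN _ R^o _ _ x (@continuousM _ R^o _ (fun=> 2^-1) x cexp cinv2)).
Qed.

Let is_derive_primitive {x : R} : 0 < x -> is_derive x 1 primitive (laplace_pdf x).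
Proof.
move=> x_gt0.
have dexp : is_derive x 1 (expR \o (fun y : R => - (sqrt2 * y)))
    (expR (- (sqrt2 * x)) * - (sqrt2 *: 1)).
  exact: is_derive1_comp (is_deriveN (is_deriveZ _ (is_derive_id x 1))).
have dprim : is_derive x 1 primitive
    (- (2^-1 *: (expR (- (sqrt2 * x)) * - (sqrt2 *: 1)))).
  apply: is_deriveN.
  have -> : (fun y => expR (- (sqrt2 * y)) / 2) =
            2^-1 \*: (expR \o (fun y => - (sqrt2 * y))).
    by apply/funext => y /=; rewrite mulrC.
  exact: is_deriveZ.
suff -> : laplace_pdf x = - (2^-1 *: (expR (- (sqrt2 * x)) * - (sqrt2 *: 1))) by [].
have sqrt2_neq0 : sqrt2 != 0 by rewrite sqrtr_eq0 -ltNge.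
have inv2E : (2 : R)^-1 = sqrt2^-1 * sqrt2^-1 by rewrite -invfM -expr2 sqr_sqrtr.
by rewrite /laplace_pdf gtr0_norm // inv2E /GRing.scale /=; field.
Qed.

Lemma integral_laplace_pdf_rray (t : R) : 0 <= t ->
  (\int[lebesgue_measure]_(x in `[t, +oo[) (laplace_pdf x)%:E =
   (expR (- (sqrt2 * t)) / 2)%:E)%E.
Proof.
move=> t_ge0; rewrite (@ge0_continuous_FTC2y _ _ primitive t 0).
- by rewrite /primitive EFinN oppeK add0e.
- by move=> x _; exact: laplace_pdf_ge0.
- exact/continuous_subspaceT/continuous_laplace_pdf.
- rewrite /primitive -[X in _ --> X]oppr0; apply: cvgN.
  rewrite -[X in _ --> X](mul0r (2^-1 : R)); apply: cvgM; last exact: cvg_cst.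
  rewrite (_ : (fun x => expR (- (sqrt2 * x))) =
               (fun z => expR (- z)) \o (fun z => sqrt2 * z)) //.
  apply: (@cvg_comp _ _ _ _ _ _ (pinfty_nbhs R)); last exact: cvgr_expR.
  by apply: gt0_cvgMry; [rewrite sqrtr_gt0|exact: cvg_id].
- by move=> x tx; case: (is_derive_primitive (le_lt_trans t_ge0 tx)).
- exact/cvg_at_right_filter/continuous_primitive.
- move=> x; rewrite in_itv /= andbT => tx.
  have dx := is_derive_primitive (le_lt_trans t_ge0 tx).
  by rewrite derive1E derive_val.
Qed.

Lemma integral_laplace_pdf_lray (t : R) : 0 <= t ->
  (\int[lebesgue_measure]_(x in `]-oo, (- t)%R]) (laplace_pdf x)%:E =
   (expR (- (sqrt2 * t)) / 2)%:E)%E.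
Proof.
move=> t_ge0; rewrite ge0_integration_by_substitutionNy.
- rewrite -integral_laplace_pdf_rray //; apply: eq_integral => x _ /=.
  by rewrite laplace_pdfN.
- exact/continuous_subspaceT/continuous_laplace_pdf.
- by move=> x _; exact: laplace_pdf_ge0.
Qed.

End laplace_density.

Section layer_cake.
Variable R : realType.

Lemma sum_odd_nat (n : nat) : \sum_(0 <= k < n) ((2 * k + 1)%:R : R) = (n ^ 2)%:R.
Proof.
elim: n => [|n IH]; first by rewrite big_nil.
by rewrite big_nat_recr //= IH -natrD; congr (_%:R); lia.
Qed.

Lemma sqr_le_odd_layers (y : R) : 0 <= y ->
  ((y ^+ 2)%:E <= \sum_(0 <= k <oo) (((2 * k + 1)%:R * ((k%:R <= y)%R)%:R)%:E))%E.
Proof.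
move=> y_ge0; have /andP[trunc_le trunc_gt] := truncn_itv y_ge0.
apply: (@le_trans _ _ (\sum_(0 <= k < (Num.truncn y).+1)
    (((2 * k + 1)%:R * ((k%:R <= y)%R)%:R)%:E))%E); last first.
  by apply: nneseries_lim_ge => k _ _; rewrite lee_fin mulr_ge0.
rewrite sumEFin lee_fin (eq_big_nat _ _ (F2 := fun k => ((2 * k + 1)%:R : R))).
  by rewrite sum_odd_nat natrX lerXn2r ?nnegrE // ltW.
move=> k /andP[_ k_le]; suff -> : k%:R <= y by rewrite mulr1.
by apply: le_trans trunc_le; rewrite ler_nat -ltnS.
Qed.

Lemma odd_mul_expR_le_geometric (k : nat) :
  (2 * k + 1)%:R * expR (- (Num.sqrt 2 * (2 * k)%:R)) <= 4 / (2 ^ (k + 1))%:R :> R.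
Proof.
have sqrt2_gt0 : 0 < Num.sqrt (2 : R) by rewrite sqrtr_gt0.
have -> : Num.sqrt 2 * (2 * k)%:R = k%:R * (2 * Num.sqrt 2) :> R.
  by rewrite natrM; ring.
rewrite expRN expRM_natl; set E := expR (2 * Num.sqrt 2).
have E_ge4 : 4 <= E.
  apply: le_trans (expR_ge1Dxn 1 (_ : 0 <= 2 * Num.sqrt 2)); last first.
    by rewrite mulr_ge0 // ltW.
  rewrite exprMn [Num.sqrt 2 ^+ 2]sqr_sqrtr // (_ : (2`!)%:R = 2 :> R) //.
  by rewrite (_ : (2:R) ^+ 2 * 2 / 2 = 4) ?lerDr //; rewrite mulfK //; ring.
have odd_le : ((2 * k + 1)%:R : R) <= (2 ^ (k + 1))%:R.
  rewrite ler_nat; elim: k => [//|k IH].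
  by move: IH; rewrite !addn1 !expnS; lia.
have inv_le : (E ^+ k)^-1 <= ((4:R) ^+ k)^-1.
  rewrite lef_pV2 ?posrE ?exprn_gt0 ?(lt_le_trans _ E_ge4) //.
  by rewrite lerXn2r ?nnegrE // (le_trans _ E_ge4).
apply: le_trans (ler_pM _ _ odd_le inv_le) _;
  rewrite ?invr_ge0 ?exprn_ge0 ?(le_trans _ E_ge4) //.
rewrite natrX exprD expr1 (_ : (4:R) ^+ k = 2 ^+ k * 2 ^+ k).
  by rewrite le_eqVlt; apply/orP; left; apply/eqP; field; rewrite expf_neq0.
by rewrite -exprMn; congr (_ ^+ _); ring.
Qed.

End layer_cake.

Lemma norm_ge_set (R : realType) (t : R) :
  [set x : R | t <= `|x|] = `]-oo, (- t)%R]%classic `|` `[t, +oo[%classic.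
Proof.
apply/seteqP; split => x /=; rewrite !in_itv /= ?andbT ler_normr lerNr.
  by case/orP; [right|left].
by case=> ->; rewrite ?orbT.
Qed.

Definition halfline (R : realType) (up : bool) (t : R) : set R :=
  if up then `[t, +oo[%classic else `]-oo, t]%classic.

Lemma closed_halfline (R : realType) (up : bool) (t : R) : closed (halfline up t).
Proof. by case: up; [exact: rray_closed|exact: lray_closed]. Qed.

Lemma measurable_halfline (R : realType) (up : bool) (t : R) :
  measurable (halfline up t).
Proof. by case: up; exact: measurable_itv. Qed.

Lemma halfline_affine_preimage (R : realType) (up : bool) (t g a : R) : 0 < a ->
  (fun z => g + a * z) @^-1` halfline up t = halfline up ((t - g) / a).
Proof.
move=> a_gt0; apply/funext => z; rewrite /preimage /halfline.
case: up => /=; rewrite !in_itv /= ?andbT.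
  by rewrite ler_pdivrMr // lerBlDl mulrC.
by rewrite ler_pdivlMr // lerBrDl mulrC.
Qed.

Section l2_space.
Variable R : realType.

Lemma l2open_coord_preimage (U : set R) (j : nat) :
  open U -> @l2open R (@l2set R `&` [set y | U (y j)]).
Proof.
move=> U_open; split; first exact: subIsetl.
move=> x [_ Uxj].
have /nbhs_ballP[r r_gt0 ballU] : nbhs (x j) U by exact: open_nbhs_nbhs.
exists r; split => // y y_l2 dist_lt; split => //=; apply: ballU.
have coord_lt : (((x j - y j) ^+ 2)%:E < (r ^+ 2)%:E)%E.
  apply: le_lt_trans dist_lt.
  apply: (@nneseries_ge_term _ (fun k => ((x k - y k) ^+ 2)%:E)) => k.
  by rewrite lee_fin sqr_ge0.
rewrite -ball_normE /ball_ /= -(ltr_pXn2r (n:=2)) // ?nnegrE ?ltW //.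
by rewrite real_normK ?num_real // -lte_fin.
Qed.

Definition cylinder (n : nat) (B : nat -> set R) : set (nat -> R) :=
  [set y | forall j, (j < n)%N -> B j (y j)].

Lemma l2Borel_closed_cylinder (n : nat) (B : nat -> set R) :
  (forall j, closed (B j)) -> @l2Borel R (@l2set R `&` cylinder n B).
Proof.
move=> B_closed.
pose O k := @l2set R `&` [set y | (if (k < n)%N then ~` B k else set0) (y k)].
have -> : @l2set R `&` cylinder n B = @l2set R `\` \bigcup_k O k.
  apply/seteqP; split => y /=.
    move=> [y_l2 y_cyl]; split => // -[k _ [_]].
    by case: ifP => // kn; apply; exact: y_cyl.
  move=> [y_l2 y_notO]; split => // j jn; apply: contrapT => notB.
  by apply: y_notO; exists j => //; split => //=; rewrite jn.
apply: sigma_algebraCD; apply: sigma_algebra_bigcup => k.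
apply: sub_sigma_algebra; apply: l2open_coord_preimage.
by case: ifP => _; [exact: closed_openC|exact: open0].
Qed.

Lemma in_l2_lincomb (g x : nat -> R) (a : R) :
  in_l2 g -> in_l2 x -> in_l2 (fun j => g j + a * x j).
Proof.
rewrite /in_l2 => g_l2 x_l2.
apply: (@le_lt_trans _ _ (\sum_(0 <= j <oo)
    (2%:E * ((g j) ^+ 2)%:E + (2 * a ^+ 2)%:E * ((x j) ^+ 2)%:E)))%E.
  apply: lee_nneseries => [k _ _|k _]; first by rewrite lee_fin sqr_ge0.
  rewrite -!EFinM -EFinD lee_fin -subr_ge0.
  have -> : 2 * g k ^+ 2 + 2 * a ^+ 2 * x k ^+ 2 - (g k + a * x k) ^+ 2 =
            (g k - a * x k) ^+ 2 by ring.
  exact: sqr_ge0.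
rewrite nneseriesD; last 2 first.
- by move=> k _ _; rewrite mule_ge0 ?lee_fin ?sqr_ge0.
- move=> k _ _; rewrite -EFinM lee_fin.
  by apply: mulr_ge0; [apply: mulr_ge0|]; rewrite ?sqr_ge0.
rewrite !nneseriesZl; last 2 first.
- by move=> k _; rewrite lee_fin sqr_ge0.
- by move=> k _; rewrite lee_fin sqr_ge0.
apply: lte_add_pinfty; apply: lte_mul_pinfty => //.
by rewrite lee_fin mulr_ge0 ?sqr_ge0.
Qed.

Lemma not_in_H1C_nneseries (lam h : nat -> R) : in_l2 h -> ~ in_H1C lam h ->
  (\sum_(0 <= j <oo) (`|h j| / Num.sqrt (lam j))%:E = +oo)%E.
Proof.
move=> h_l2 h_notH1C; apply/eqP; apply: contrapT => /negP h_fin.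
by apply: h_notH1C; split; rewrite // ltey.
Qed.

End l2_space.

Lemma measureI_ae d (T : measurableType d) (R : realType)
    (mu : {measure set T -> \bar R}) (E G : set T) :
  measurable E -> measurable G -> {ae mu, forall w, G w} -> mu (E `&` G) = mu E.
Proof.
move=> mE mG [N [mN muN0 notG_N]].
apply/eqP; rewrite eq_le le_measure ?inE ?subIsetl //=; last exact: measurableI.
apply: (@le_trans _ _ (mu ((E `&` G) `|` N))).
  apply: le_measure; rewrite ?inE //; first exact/measurableU/mN/measurableI.
  move=> w Ew; have [Gw|notGw] := pselect (G w); first by left.
  by right; apply: notG_N.
apply: (@le_trans _ _ (mu (E `&` G) + mu N)%E); last by rewrite muN0 adde0.
exact: measureU2 (measurableI _ _ mE mG) mN.
Qed.

Lemma measurable_in_l2 d (Omega : measurableType d) (R : realType)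
    (X : nat -> Omega -> R) :
  (forall j, measurable_fun setT (X j)) ->
  measurable [set w | in_l2 (fun j => X j w)].
Proof.
move=> X_measurable.
pose sqnorm w := (\sum_(0 <= j <oo) ((X j w) ^+ 2)%:E)%E.
have sqnorm_measurable : measurable_fun setT sqnorm.
  apply: ge0_emeasurable_sum => [k w _ _|k _]; first by rewrite lee_fin sqr_ge0.
  exact/measurable_EFinP/measurable_funX.
have -> : [set w | in_l2 (fun j => X j w)] = setT `&` sqnorm @^-1` (~` [set +oo%E]).
  apply/seteqP; split => w /=; rewrite /in_l2 ltey; first by move=> /eqP.
  by case=> _ /eqP.
by apply: sqnorm_measurable => //; apply: measurableC; exact: emeasurable_set1.
Qed.

Section laplace_sequence.
Variables (R : realType) (d : measure_display) (Omega : measurableType d).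
Variables (P : probability Omega R) (Z : nat -> Omega -> R).
Hypothesis Z_iid : iid_laplace P Z.
Local Notation sqrt2 := (Num.sqrt (2 : R)).

Lemma measurable_laplace_preimage (j : nat) (B : set R) :
  measurable B -> measurable (Z j @^-1` B).
Proof. by move=> mB; rewrite -[X in measurable X]setTI; exact: Z_iid.1. Qed.

Lemma prob_laplace_rray (j : nat) (t : R) : 0 <= t ->
  P (Z j @^-1` `[t, +oo[%classic) = (expR (- (sqrt2 * t)) / 2)%:E.
Proof. by move=> t_ge0; rewrite Z_iid.2.1 // integral_laplace_pdf_rray. Qed.

Lemma prob_laplace_lray (j : nat) (t : R) : 0 <= t ->
  P (Z j @^-1` `]-oo, (- t)%R]%classic) = (expR (- (sqrt2 * t)) / 2)%:E.
Proof. by move=> t_ge0; rewrite Z_iid.2.1 // integral_laplace_pdf_lray. Qed.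

Lemma prob_laplace_abs_ge (j : nat) (t : R) : 0 <= t ->
  (P (Z j @^-1` [set x | (t <= `|x|)%R]) <= (expR (- (sqrt2 * t)))%:E)%E.
Proof.
move=> t_ge0; rewrite norm_ge_set.
have mZ_itv (i : interval R) : measurable (Z j @^-1` [set` i]).
  by apply: measurable_laplace_preimage; exact: measurable_itv.
rewrite preimage_setU; apply: (@le_trans _ _
  (P (Z j @^-1` `]-oo, (- t)%R]%classic) + P (Z j @^-1` `[t, +oo[%classic))%E).
  exact: measureU2.
by rewrite prob_laplace_lray // prob_laplace_rray // -EFinD -splitr.
Qed.

(* The true value is [1]; the layer-cake bound
   [Z^2 <= 4 sum_k (2k+1) 1{|Z| >= 2k}] with [P(|Z| >= 2k) <= 4^-k] gives [16]. *)
Lemma laplace_second_moment_le (j : nat) :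
  (\int[P]_w ((Z j w) ^+ 2)%:E <= 16%:E)%E.
Proof.
pose layer k := Z j @^-1` [set x : R | (2 * k)%:R <= `|x|].
have layer_measurable k : measurable (layer k).
  by apply: measurable_laplace_preimage; rewrite norm_ge_set; exact: measurableU.
pose f k w := (((2 * k + 1)%:R : R) * \1_(layer k) w)%:E.
have f_ge0 k w : (0 <= f k w)%E by rewrite lee_fin mulr_ge0.
have f_measurable k : measurable_fun setT (f k).
  apply/measurable_EFinP; apply: measurable_funM => //; exact: measurable_indic.
have sqr_le w : (((Z j w) ^+ 2)%:E <= 4%:E * \sum_(0 <= k <oo) f k w)%E.
  have -> : (Z j w) ^+ 2 = 4 * (`|Z j w| / 2) ^+ 2.
    by rewrite exprMn -real_normK ?num_real //; field.
  rewrite EFinM lee_pmul2l // (le_trans (sqr_le_odd_layers _)) ?divr_ge0 //.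
  apply: lee_nneseries => [k _ _|k _]; first by rewrite lee_fin mulr_ge0.
  rewrite /f indicE lee_fin /layer ler_pdivlMr // [k%:R * 2]mulrC -[2 * k%:R]natrM.
  case: (boolP ((2 * k)%:R <= `|Z j w|)) => [in_layer|_].
    by rewrite mem_set.
  by rewrite mulr0 mulr_ge0.
apply: (le_trans (ge0_le_integral _ _ _ _ _ (fun w _ => sqr_le w))) => //.
- by move=> w _; rewrite lee_fin sqr_ge0.
- exact/measurable_EFinP/measurable_funX/Z_iid.1.
- by apply: measurable_funeM; exact: ge0_emeasurable_sum.
rewrite ge0_integralZl_EFin //; last 2 first.
- by move=> w _; exact: nneseries_ge0.
- exact: ge0_emeasurable_sum.
rewrite integral_nneseries //.
apply: (@le_trans _ _ (4%:E * 4%:E)%E); last by rewrite -EFinM lee_fin; lra.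
have geometric : (\sum_(0 <= k <oo) ((4:R) / (2 ^ (k + 1))%:R)%:E = 4%:E)%E.
  by have := @cvg_geometric_eseries_half R 4 0; rewrite expr0 divr1 => /cvg_lim <-.
rewrite lee_pmul2l // -geometric.
apply: lee_nneseries => [k _ _|k _]; first exact: integral_ge0.
rewrite /f; under eq_integral do rewrite EFinM.
rewrite ge0_integralZl_EFin //; last exact/measurable_EFinP/measurable_indic.
rewrite integral_indic // setIT.
apply: le_trans (_ : (((2 * k + 1)%:R * expR (- (sqrt2 * (2 * k)%:R)))%:E <= _)%E).
  by rewrite EFinM lee_pmul2l ?lte_fin // prob_laplace_abs_ge.
by rewrite lee_fin odd_mul_expR_le_geometric.
Qed.

Lemma prob_laplace_halfline (j : nat) (up : bool) (t : R) :
  (if up then 0 <= t else t <= 0) ->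
  P (Z j @^-1` halfline up t) = (expR (- (sqrt2 * `|t|)) / 2)%:E.
Proof.
case: up => t_sign; first by rewrite prob_laplace_rray // ger0_norm.
have := prob_laplace_lray j (_ : 0 <= - t); rewrite opprK => -> //.
  by rewrite ler0_norm.
by rewrite oppr_ge0.
Qed.

End laplace_sequence.

Section iclp_mechanism.
Variables (R : realType) (d : measure_display) (Omega : measurableType d).
Variables (P : probability Omega R) (Z : nat -> Omega -> R).
Hypothesis Z_iid : iid_laplace P Z.
Variable lam : nat -> R.
Hypothesis lam_cov : cov_eigenvalues lam.
Local Notation sqrt2 := (Num.sqrt (2 : R)).

Let lam_ge0 j : 0 <= lam j. Proof. exact/ltW/lam_cov.1. Qed.

Lemma ae_in_l2_iclp0 : {ae P, forall w, in_l2 (iclp0 lam Z w)}.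
Proof.
pose sqnorm w := (\sum_(0 <= j <oo) (lam j)%:E * ((Z j w) ^+ 2)%:E)%E.
have term_ge0 j w : (0 <= (lam j)%:E * ((Z j w) ^+ 2)%:E)%E.
  by rewrite mule_ge0 ?lee_fin ?sqr_ge0.
have term_measurable j : measurable_fun setT (fun w => ((Z j w) ^+ 2)%:E).
  exact/measurable_EFinP/measurable_funX/Z_iid.1.
have sqnorm_ge0 w : (0 <= sqnorm w)%E by exact: nneseries_ge0.
have sqnorm_integrable : P.-integrable setT sqnorm.
  apply/integrableP; split.
    by apply: ge0_emeasurable_sum => // k _; exact: measurable_funeM.
  under eq_integral => w _ do rewrite gee0_abs //.
  rewrite integral_nneseries // => [|k]; last exact: measurable_funeM.
  apply: (@le_lt_trans _ _ (\sum_(0 <= j <oo) (16 : R)%:E * (lam j)%:E))%E.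
    apply: lee_nneseries => [k _ _|k _]; first exact: integral_ge0.
    rewrite ge0_integralZl_EFin //; last by move=> w _; rewrite lee_fin sqr_ge0.
    by rewrite muleC lee_wpmul2r ?lee_fin ?laplace_second_moment_le.
  rewrite nneseriesZl => [|k _]; last by rewrite lee_fin.
  exact: lte_mul_pinfty lam_cov.2.2.
apply: filterS (integrable_ae measurableT sqnorm_integrable) => w /(_ I) sqnorm_fin.
rewrite /in_l2.
have -> : (\sum_(0 <= j <oo) ((iclp0 lam Z w j) ^+ 2)%:E)%E = sqnorm w.
  by apply: eq_eseriesr => j _; rewrite /iclp0 exprMn sqr_sqrtr // EFinM.
by rewrite -ge0_fin_numE.
Qed.

Lemma prob_mechanism_in_l2 (g : nat -> R) (sigma : R) (E : set Omega) :
  in_l2 g -> measurable E ->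
  P (E `&` [set w | in_l2 (fun j => g j + sigma * iclp0 lam Z w j)]) = P E.
Proof.
move=> g_l2 mE; apply: measureI_ae => //.
  apply: measurable_in_l2 => j; rewrite /iclp0.
  exact/measurable_funD/measurable_funM/measurable_funM/Z_iid.1.
by apply: filterS ae_in_l2_iclp0 => w; exact: in_l2_lincomb.
Qed.

Lemma prob_mechanism_cylinder (g c : nat -> R) (b : nat -> bool) (sigma : R)
    (n : nat) :
  in_l2 g -> 0 < sigma -> (forall j, if b j then g j <= c j else c j <= g j) ->
  P ((fun w j => g j + sigma * iclp0 lam Z w j) @^-1`
       (@l2set R `&` cylinder n (fun j => halfline (b j) (c j)))) =
  (2 ^- n * expR (- (sqrt2 / sigma) *
     \sum_(0 <= j < n) `|c j - g j| / Num.sqrt (lam j)))%:E.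
Proof.
move=> g_l2 sigma_gt0 bc.
have scale_gt0 j : 0 < sigma * Num.sqrt (lam j).
  by rewrite mulr_gt0 ?sqrtr_gt0 ?lam_cov.1.
pose t j := (c j - g j) / (sigma * Num.sqrt (lam j)).
pose event := (fun w j => g j + sigma * iclp0 lam Z w j) @^-1`
                 cylinder n (fun j => halfline (b j) (c j)).
have eventE :
    event = \bigcap_(j in [set j | j \in iota 0 n]) Z j @^-1` halfline (b j) (t j).
  apply/seteqP; split => w /=.
    move=> w_event j; rewrite /= mem_iota add0n => /andP[_ /w_event].
    by rewrite -(halfline_affine_preimage _ _ _ (scale_gt0 j)) /= /iclp0 mulrA.
  move=> w_cap j jn; have /w_cap : j \in iota 0 n by rewrite mem_iota.
  by rewrite -(halfline_affine_preimage _ _ _ (scale_gt0 j)) /= /iclp0 mulrA.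
have event_measurable : measurable event.
  rewrite eventE; apply: bigcap_measurableType => j _.
  by apply: (measurable_laplace_preimage Z_iid); exact: measurable_halfline.
rewrite preimage_setI setIC -/event prob_mechanism_in_l2 // eventE.
rewrite Z_iid.2.2 ?iota_uniq //; last by move=> j; exact: measurable_halfline.
rewrite (eq_bigr (fun j => (expR (- (sqrt2 * `|t j|)) / 2)%:E)); last first.
  move=> j _; rewrite prob_laplace_halfline //.
  rewrite /t; case: (b j) (bc j) => bcj.
    by rewrite divr_ge0 ?subr_ge0 // ltW.
  by rewrite ler_pdivrMr // mul0r subr_le0.
have -> : iota 0 n = index_iota 0 n by rewrite /index_iota subn0.
rewrite prodEFin big_split /= -expR_sum prodr_const_nat subn0 exprVn mulrC.
congr (_ * expR _)%:E; rewrite big_distrr /=; apply: eq_bigr => j _.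
rewrite /t normrM normfV (gtr0_norm (scale_gt0 j)) invfM; ring.
Qed.

End iclp_mechanism.

Theorem theorem3 (R : realType) (Rec : eqType) (Dc : set (seq Rec))
  (f : seq Rec -> nat -> R) (hf : forall D, Dc D -> in_l2 (f D))
  (lam : nat -> R) (hlam : cov_eigenvalues lam)
  (D1 D2 : seq Rec) (hD1 : Dc D1) (hD2 : Dc D2) (hadj : adjacent_datasets D1 D2)
  (hC : in_HC lam (fun j => f D1 j - f D2 j))
  (hnC1 : ~ in_H1C lam (fun j => f D1 j - f D2 j))
  (d : measure_display) (Omega : measurableType d) (P : probability Omega R)
  (Z : nat -> Omega -> R) (hZ : iid_laplace P Z)
  (eps : R) (heps : 0 < eps) :
  ~ exists sigma : R, 0 < sigma /\
      eps_DP P Dc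
        (fun D w => fun j => f D j + sigma * iclp0 lam Z w j) eps.
Proof.
move=> [sigma [sigma_gt0 DP]].
pose h j := f D1 j - f D2 j.
pose S n := \sum_(0 <= j < n) `|h j| / Num.sqrt (lam j).
have [n S_gt] : exists n, sigma * eps / Num.sqrt 2 < S n.
  apply: nneseries_pinfty_partial_gt; first by move=> k; rewrite divr_ge0 ?sqrtr_ge0.
  exact: not_in_H1C_nneseries hC.1 hnC1.
pose b j := 0 <= h j.
pose A := @l2set R `&` cylinder n (fun j => halfline (b j) (f D1 j)).
have := DP D1 D2 hD1 hD2 hadj A
  (l2Borel_closed_cylinder n (fun j => @closed_halfline R _ _)).
have sign1 j : if b j then f D1 j <= f D1 j else f D1 j <= f D1 j by case: (b j).
have sign2 j : if b j then f D2 j <= f D1 j else f D1 j <= f D2 j.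
  by rewrite /b /h subr_ge0; case: leP => // /ltW.
rewrite (prob_mechanism_cylinder hZ hlam n (hf _ hD1) sigma_gt0 sign1).
rewrite (prob_mechanism_cylinder hZ hlam n (hf _ hD2) sigma_gt0 sign2) -/(S n).
rewrite -EFinM lee_fin big1 => [|j _]; last by rewrite subrr normr0 mul0r.
rewrite mulr0 expR0 mulr1 mulrCA ler_pMr ?invr_gt0 ?exprn_gt0 //.
rewrite -expRD -[X in X <= _]expR0 ler_expR.
have eps_lt : eps < S n * Num.sqrt 2 / sigma.
  by rewrite ltr_pdivlMr // mulrC -ltr_pdivrMr // sqrtr_gt0.
have -> : - (Num.sqrt 2 / sigma) * S n = - (S n * Num.sqrt 2 / sigma) by ring.
lra.
Qed.
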